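(* If $(\mathbf M,\tau)$ is a subdirectly irreducible state BL-algebra, then $\tau(M)$ and $\mathrm{Ker}(\tau)$ are linearly ordered.
   Context: A BL-algebra is an algebra $\mathbf M=(M;\wedge,\vee,\odot,\to,0,1)$ of type $\langle 2,2,2,2,0,0\rangle$ such that $(M;\wedge,\vee,0,1)$ is a bounded lattice, $(M;\odot,1)$ is a commutative monoid, and for all $a,b,c$: $c\le a\to b$ iff $a\odot c\le b$; $a\wedge b=a\odot(a\to b)$; $(a\to b)\vee(b\to a)=1$. A state-operator on $\mathbf M$ is a map $\tau:M\to M$ such that for all $x,y$: $\tau(0)=0$; $\tau(x\to y)=\tau(x)\to\tau(x\wedge y)$; $\tau(x\odot y)=\tau(x)\odot\tau(x\to(x\odot y))$; $\tau(\tau(x)\odot\tau(y))=\tau(x)\odot\tau(y)$; $\tau(\tau(x)\to\tau(y))=\tau(x)\to\tau(y)$; $(\mathbf M,\tau)$ is then a state BL-algebra, regarded as an algebra with the extra unary operation $\tau$, and subdirect irreducibility refers to this algebra. $\mathrm{Ker}(\tau)=\{a\in M:\tau(a)=1\}$. *)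

Set Implicit Arguments.

Record BLAlgebra := {
  bl_car :> Type;
  bl_meet : bl_car -> bl_car -> bl_car;
  bl_join : bl_car -> bl_car -> bl_car;
  bl_mul  : bl_car -> bl_car -> bl_car;
  bl_imp  : bl_car -> bl_car -> bl_car;
  bl_zero : bl_car;
  bl_one  : bl_car;
  bl_meetA : forall x y z, bl_meet x (bl_meet y z) = bl_meet (bl_meet x y) z;
  bl_joinA : forall x y z, bl_join x (bl_join y z) = bl_join (bl_join x y) z;
  bl_meetC : forall x y, bl_meet x y = bl_meet y x;
  bl_joinC : forall x y, bl_join x y = bl_join y x;
  bl_meetJ : forall x y, bl_meet x (bl_join x y) = x;
  bl_joinM : forall x y, bl_join x (bl_meet x y) = x;
  bl_meet0 : forall x, bl_meet bl_zero x = bl_zero;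
  bl_join1 : forall x, bl_join bl_one x = bl_one;
  bl_mulA : forall x y z, bl_mul x (bl_mul y z) = bl_mul (bl_mul x y) z;
  bl_mulC : forall x y, bl_mul x y = bl_mul y x;
  bl_mul1 : forall x, bl_mul bl_one x = x;
  (* residuation, divisibility, prelinearity (<= is the lattice order) *)
  bl_res : forall a b c,
      bl_meet c (bl_imp a b) = c <-> bl_meet (bl_mul a c) b = bl_mul a c;
  bl_div : forall a b, bl_meet a b = bl_mul a (bl_imp a b);
  bl_prel : forall a b, bl_join (bl_imp a b) (bl_imp b a) = bl_one
}.

Section Ops.
Variable M : BLAlgebra.

Definition bl_le (x y : M) : Prop := bl_meet M x y = x.

Definition state_operator (tau : M -> M) : Prop :=
  tau (bl_zero M) = bl_zero M /\
  (forall x y, tau (bl_imp M x y) = bl_imp M (tau x) (tau (bl_meet M x y))) /\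
  (forall x y, tau (bl_mul M x y) =
               bl_mul M (tau x) (tau (bl_imp M x (bl_mul M x y)))) /\
  (forall x y, tau (bl_mul M (tau x) (tau y)) = bl_mul M (tau x) (tau y)) /\
  (forall x y, tau (bl_imp M (tau x) (tau y)) = bl_imp M (tau x) (tau y)).

Definition state_congruence (tau : M -> M) (th : M -> M -> Prop) : Prop :=
  (forall x, th x x) /\
  (forall x y, th x y -> th y x) /\
  (forall x y z, th x y -> th y z -> th x z) /\
  (forall x x' y y', th x x' -> th y y' ->
      th (bl_meet M x y) (bl_meet M x' y') /\
      th (bl_join M x y) (bl_join M x' y') /\
      th (bl_mul M x y) (bl_mul M x' y') /\
      th (bl_imp M x y) (bl_imp M x' y')) /\
  (forall x y, th x y -> th (tau x) (tau y)).

(* subdirectly irreducible: nontrivial, and the intersection of all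
   non-identity congruences is not the identity congruence *)
Definition subdirectly_irreducible (tau : M -> M) : Prop :=
  (exists x y : M, x <> y) /\
  exists a b : M, a <> b /\
    forall th, state_congruence tau th ->
      (exists x y, th x y /\ x <> y) -> th a b.

Definition linearly_ordered (S : M -> Prop) : Prop :=
  forall x y, S x -> S y -> bl_le x y \/ bl_le y x.

Definition image_of (tau : M -> M) : M -> Prop := fun y => exists x, y = tau x.
Definition Ker (tau : M -> M) : M -> Prop := fun a => tau a = bl_one M.

End Ops.

Arguments state_operator {M} tau.
Arguments state_congruence {M} tau th.
Arguments subdirectly_irreducible {M} tau.
Arguments linearly_ordered {M} S.
Arguments image_of {M} tau _.
Arguments Ker {M} tau _.
Arguments bl_le {M} x y.

(* For u with u <= tau(u), the congruence of the filter generated by u,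
   x ~ y iff u^n ⊙ x <= y and u^n ⊙ y <= x for some n, is a state congruence,
   and it identifies u with 1.  If a, b lie in tau(M) or in Ker(tau), then
   u := a -> b satisfies this.  If a, b were incomparable, the congruences of
   u = a -> b and v = b -> a would both be nontrivial, hence both contain the
   monolith; but u^n ∨ v^m = 1 by prelinearity, so their intersection is the
   identity. *)
From Stdlib Require Import Classical.

Set Implicit Arguments.

Section BLAlgebraTheory.
Variable M : BLAlgebra.
Local Notation mt := (bl_meet M).
Local Notation jn := (bl_join M).
Local Notation ml := (bl_mul M).
Local Notation im := (bl_imp M).
Local Notation one := (bl_one M).
Local Notation le := (@bl_le M).

Lemma meet_id x : mt x x = x.
Proof. pose proof (bl_meetJ M x (mt x x)) as H. rewrite bl_joinM in H. exact H. Qed.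

Lemma le_refl x : le x x.
Proof. exact (meet_id x). Qed.

Lemma le_trans x y z : le x y -> le y z -> le x z.
Proof. unfold bl_le; intros Hxy Hyz. rewrite <- Hxy, <- bl_meetA, Hyz. reflexivity. Qed.

Lemma le_antisym x y : le x y -> le y x -> x = y.
Proof. unfold bl_le; intros Hxy Hyx. rewrite <- Hxy, bl_meetC. exact Hyx. Qed.

Lemma le_meet x y z : le z x -> le z y -> le z (mt x y).
Proof. unfold bl_le; intros Hx Hy. rewrite bl_meetA, Hx, Hy. reflexivity. Qed.

Lemma meet_le_l x y : le (mt x y) x.
Proof. unfold bl_le. rewrite (bl_meetC M _ x), bl_meetA, meet_id. reflexivity. Qed.

Lemma meet_le_r x y : le (mt x y) y.
Proof. rewrite bl_meetC. apply meet_le_l. Qed.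

Lemma join_r x y : le x y -> jn x y = y.
Proof. unfold bl_le; intros H. rewrite <- H, bl_joinC, bl_meetC, bl_joinM. reflexivity. Qed.

Lemma le_join_l x y : le x (jn x y).
Proof. apply bl_meetJ. Qed.

Lemma le_join_r x y : le y (jn x y).
Proof. rewrite bl_joinC. apply le_join_l. Qed.

Lemma join_le x y z : le x z -> le y z -> le (jn x y) z.
Proof.
  intros Hx Hy.
  assert (E : jn (jn x y) z = z) by (rewrite <- bl_joinA, (join_r Hy), (join_r Hx); reflexivity).
  unfold bl_le. rewrite <- E. apply bl_meetJ.
Qed.

Lemma le_one x : le x one.
Proof. unfold bl_le. rewrite <- (bl_join1 M x), bl_joinC. apply bl_meetJ. Qed.

Lemma one_le_eq x : le one x -> x = one.
Proof. intros H. apply le_antisym; [apply le_one | exact H]. Qed.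

Lemma le_imp c a b : le c (im a b) <-> le (ml a c) b.
Proof. apply bl_res. Qed.

Lemma mul_le_mono_l z x y : le x y -> le (ml z x) (ml z y).
Proof. intros H. apply le_imp. apply (le_trans H), le_imp, le_refl. Qed.

Lemma mul_le_mono x y x' y' : le x x' -> le y y' -> le (ml x y) (ml x' y').
Proof.
  intros Hx Hy. apply (le_trans (mul_le_mono_l x Hy)).
  rewrite (bl_mulC M x), (bl_mulC M x'). apply mul_le_mono_l, Hx.
Qed.

Lemma imp_le_one_iff a b : le a b <-> im a b = one.
Proof.
  split.
  - intros H. apply one_le_eq, le_imp. rewrite bl_mulC, bl_mul1. exact H.
  - intros H. pose proof (proj1 (le_imp one a b)) as Hab.
    rewrite H, bl_mulC, bl_mul1 in Hab. exact (Hab (le_refl one)).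
Qed.

Lemma imp_xx x : im x x = one.
Proof. apply imp_le_one_iff, le_refl. Qed.

Lemma mul_le_l x y : le (ml x y) x.
Proof. apply le_imp. rewrite imp_xx. apply le_one. Qed.

Lemma mul_le_r x y : le (ml x y) y.
Proof. rewrite bl_mulC. apply mul_le_l. Qed.

Lemma mul_imp_le x y : le (ml x (im x y)) y.
Proof. apply le_imp, le_refl. Qed.

Lemma mul_imp_eq x y : le x y -> ml y (im y x) = x.
Proof. intros H. rewrite <- bl_div, bl_meetC. exact H. Qed.

Lemma mulDr z x y : ml z (jn x y) = jn (ml z x) (ml z y).
Proof.
  apply le_antisym.
  - apply le_imp, join_le; apply le_imp; [apply le_join_l | apply le_join_r].
  - apply join_le; apply mul_le_mono_l; [apply le_join_l | apply le_join_r].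
Qed.

Lemma join_mul_eq1 x y z : jn x y = one -> jn x z = one -> jn x (ml y z) = one.
Proof.
  intros Hy Hz. apply one_le_eq.
  rewrite <- (bl_mul1 M one) at 1. rewrite <- Hy at 1. rewrite <- Hz.
  rewrite mulDr, (bl_mulC M (jn x y) x), (bl_mulC M (jn x y) z), !mulDr.
  repeat apply join_le.
  - apply (le_trans (mul_le_l _ _)), le_join_l.
  - apply (le_trans (mul_le_l _ _)), le_join_l.
  - apply (le_trans (mul_le_r _ _)), le_join_l.
  - rewrite bl_mulC. apply le_join_r.
Qed.

Fixpoint pw (u : M) (n : nat) : M :=
  match n with 0 => one | S k => ml u (pw u k) end.

Lemma pwD u n m : pw u (n + m) = ml (pw u n) (pw u m).
Proof.
  induction n as [|n IH]; simpl.
  - rewrite bl_mul1. reflexivity.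
  - rewrite IH, bl_mulA. reflexivity.
Qed.

Lemma join_pw_eq1 u v n m : jn u v = one -> jn (pw u n) (pw v m) = one.
Proof.
  assert (Hr : forall x y k, jn x y = one -> jn x (pw y k) = one).
  { intros x y k H. induction k as [|k IH]; simpl.
    - rewrite bl_joinC. apply bl_join1.
    - apply join_mul_eq1; assumption. }
  intros H. apply Hr. rewrite bl_joinC. apply Hr. rewrite bl_joinC. exact H.
Qed.

(* x is below y modulo the filter generated by u. *)
Definition filter_le (u x y : M) : Prop := exists n, le (ml (pw u n) x) y.

Definition filter_cong (u x y : M) : Prop := filter_le u x y /\ filter_le u y x.

Lemma filter_le_refl u x : filter_le u x x.
Proof. exists 0. simpl. rewrite bl_mul1. apply le_refl. Qed.

Lemma filter_le_trans u x y z : filter_le u x y -> filter_le u y z -> filter_le u x z.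
Proof.
  intros [n Hn] [m Hm]. exists (m + n).
  rewrite pwD, <- bl_mulA. exact (le_trans (mul_le_mono_l _ Hn) Hm).
Qed.

Lemma filter_le_mul u x x' y y' :
  filter_le u x x' -> filter_le u y y' -> filter_le u (ml x y) (ml x' y').
Proof.
  intros [n Hn] [m Hm]. exists (n + m).
  replace (ml (pw u (n + m)) (ml x y)) with (ml (ml (pw u n) x) (ml (pw u m) y)).
  - apply mul_le_mono; assumption.
  - rewrite pwD, !bl_mulA. f_equal. rewrite <- !bl_mulA. f_equal. apply bl_mulC.
Qed.

Lemma filter_le_meet u x x' y y' :
  filter_le u x x' -> filter_le u y y' -> filter_le u (mt x y) (mt x' y').
Proof.
  intros [n Hn] [m Hm]. exists (n + m). rewrite pwD. apply le_meet.
  - apply (le_trans (mul_le_mono (mul_le_l _ _) (meet_le_l _ _)) Hn).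
  - apply (le_trans (mul_le_mono (mul_le_r _ _) (meet_le_r _ _)) Hm).
Qed.

Lemma filter_le_join u x x' y y' :
  filter_le u x x' -> filter_le u y y' -> filter_le u (jn x y) (jn x' y').
Proof.
  intros [n Hn] [m Hm]. exists (n + m). rewrite pwD, mulDr. apply join_le.
  - apply (le_trans (mul_le_mono (mul_le_l _ _) (le_refl x))).
    apply (le_trans Hn), le_join_l.
  - apply (le_trans (mul_le_mono (mul_le_r _ _) (le_refl y))).
    apply (le_trans Hm), le_join_r.
Qed.

Lemma filter_le_imp u x x' y y' :
  filter_le u x' x -> filter_le u y y' -> filter_le u (im x y) (im x' y').
Proof.
  intros [n Hn] [m Hm]. exists (n + m). apply le_imp.
  replace (ml x' (ml (pw u (n + m)) (im x y)))
    with (ml (pw u m) (ml (ml (pw u n) x') (im x y))).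
  - apply (le_trans (y := ml (pw u m) y)); [|exact Hm].
    apply mul_le_mono_l, (le_trans (mul_le_mono Hn (le_refl _))), mul_imp_le.
  - rewrite pwD, !bl_mulA. f_equal.
    rewrite (bl_mulC M x' (pw u n)), (bl_mulC M (pw u m)), <- !bl_mulA.
    f_equal. apply bl_mulC.
Qed.

Lemma filter_cong_one u : filter_cong u u one.
Proof.
  split.
  - exists 0. apply le_one.
  - exists 1. simpl. apply (le_trans (mul_le_l _ _)), mul_le_l.
Qed.

(* Prelinearity makes the filter congruences of u and v meet in the identity. *)
Lemma filter_le_prelinear u v x y :
  jn u v = one -> filter_le u x y -> filter_le v x y -> le x y.
Proof.
  intros Huv [n Hn] [m Hm].
  rewrite <- (bl_mul1 M x), <- (join_pw_eq1 u v n m Huv), bl_mulC, mulDr.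
  apply join_le; rewrite bl_mulC; assumption.
Qed.

Section StateOperator.
Variable tau : M -> M.
Hypothesis Htau : state_operator tau.

Lemma tau_one : tau one = one.
Proof.
  destruct Htau as [Hzero [Himp _]].
  pose proof (Himp (bl_zero M) (bl_zero M)) as E.
  rewrite meet_id, Hzero, !imp_xx in E. exact E.
Qed.

Lemma tau_le_mono x y : le x y -> le (tau x) (tau y).
Proof.
  destruct Htau as [_ [_ [Hmul _]]]. intros H.
  rewrite <- (mul_imp_eq H), Hmul. apply mul_le_l.
Qed.

Lemma tau_mul_ge x y : le (ml (tau x) (tau y)) (tau (ml x y)).
Proof.
  destruct Htau as [_ [_ [Hmul _]]]. rewrite Hmul.
  apply mul_le_mono_l, tau_le_mono, le_imp, le_refl.
Qed.

Lemma pw_le_tau u n : le u (tau u) -> le (pw u n) (tau (pw u n)).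
Proof.
  intros Hu. induction n as [|n IH]; simpl.
  - rewrite tau_one. apply le_refl.
  - exact (le_trans (mul_le_mono Hu IH) (tau_mul_ge _ _)).
Qed.

Lemma filter_le_tau u x y :
  le u (tau u) -> filter_le u x y -> filter_le u (tau x) (tau y).
Proof.
  intros Hu [n Hn]. exists n.
  apply (le_trans (mul_le_mono (pw_le_tau n Hu) (le_refl _))).
  apply (le_trans (tau_mul_ge _ _)), tau_le_mono, Hn.
Qed.

Lemma filter_cong_state_congruence u :
  le u (tau u) -> state_congruence tau (filter_cong u).
Proof.
  intros Hu. unfold filter_cong.
  split; [|split; [|split; [|split]]].
  - intros x. split; apply filter_le_refl.
  - intros x y [Hxy Hyx]. split; assumption.
  - intros x y z [Hxy Hyx] [Hyz Hzy]. split; eapply filter_le_trans; eassumption.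
  - intros x x' y y' [Hx Hx'] [Hy Hy'].
    repeat split; first [ apply filter_le_meet | apply filter_le_join
                        | apply filter_le_mul | apply filter_le_imp ]; assumption.
  - intros x y [Hxy Hyx]. split; apply filter_le_tau; assumption.
Qed.

Lemma linearly_ordered_of_imp_le_tau (P : M -> Prop) :
  subdirectly_irreducible tau ->
  (forall a b, P a -> P b -> le (im a b) (tau (im a b))) ->
  linearly_ordered P.
Proof.
  intros [_ [a0 [b0 [Hab0 Hmonolith]]]] HP a b Pa Pb.
  destruct (classic (le a b)) as [Hab|Hab]; [left; exact Hab|].
  destruct (classic (le b a)) as [Hba|Hba]; [right; exact Hba|].
  exfalso. apply Hab0.
  assert (Hcong : forall x y, P x -> P y -> ~ le x y -> filter_cong (im x y) a0 b0).
  { intros x y Px Py Hxy. apply Hmonolith.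
    - apply filter_cong_state_congruence, HP; assumption.
    - exists (im x y), one. split; [apply filter_cong_one|].
      intros E. apply Hxy, imp_le_one_iff, E. }
  destruct (Hcong a b Pa Pb Hab) as [Hu1 Hu2].
  destruct (Hcong b a Pb Pa Hba) as [Hv1 Hv2].
  apply le_antisym; eapply filter_le_prelinear; eauto using bl_prel.
Qed.

End StateOperator.
End BLAlgebraTheory.

Theorem lemma2p2 (M : BLAlgebra) (tau : M -> M) :
  state_operator tau ->
  subdirectly_irreducible tau ->
  linearly_ordered (image_of tau) /\ linearly_ordered (Ker tau).
Proof.
  intros Htau Hsi.
  split; apply (linearly_ordered_of_imp_le_tau Htau _ Hsi).
  - intros a b [x ->] [y ->]. destruct Htau as [_ [_ [_ [_ Htau_imp]]]].
    rewrite Htau_imp. apply le_refl.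
  - intros a b _ Hb. unfold Ker in Hb.
    replace (tau (bl_imp M a b)) with (bl_one M); [apply le_one|].
    symmetry. apply one_le_eq. rewrite <- Hb.
    apply (tau_le_mono Htau), le_imp, mul_le_r.
Qed.
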